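(* Let $n\geq 1$. There exist functions $F\in C^\infty(\mathbb{R}^n)$ and $v\in C^\infty(\mathbb{R}^n)$ such that \[ \sum_{i,j=1}^n D_iv\,D_jv\,D^2_{ij}v\;+\;\sum_{i=1}^n D_iv\,D_iF\;=\;0\quad\text{on }\mathbb{R}^n, \] and open sets $\Omega^+,\Omega^-\subseteq\mathbb{R}^n$ such that \[ \sup_{\Omega^+} v\;>\;\max_{\partial\Omega^+} v \qquad\text{and}\qquad \inf_{\Omega^-} v\;<\;\min_{\partial\Omega^-} v , \] i.e. $v$ satisfies neither the Maximum nor the Minimum Principle.
   Context: $D_i=\partial/\partial x_i$ and $D^2_{ij}=\partial^2/\partial x_i\partial x_j$. The equation is the scalar $\infty$-Laplace equation perturbed by the linear first-order term $Dv\cdot DF$. *)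

From HB Require Import structures.
From mathcomp Require Import all_boot all_order all_algebra.
From mathcomp Require Import all_classical all_reals all_analysis.
Set Implicit Arguments. Unset Strict Implicit. Unset Printing Implicit Defensive.
Import Order.TTheory GRing.Theory Num.Theory.
Import numFieldNormedType.Exports.
Local Open Scope classical_set_scope.
Local Open Scope ring_scope.

Definition evec (R : realType) (n : nat) (i : 'I_n) : 'rV[R]_n := delta_mx 0 i.

Definition partial (R : realType) (n : nat) (f : 'rV[R]_n -> R) (i : 'I_n)
  : 'rV[R]_n -> R := fun x => 'D_(evec R i) f x.

Fixpoint iter_partial (R : realType) (n : nat) (l : seq 'I_n) (f : 'rV[R]_n -> R)
  : 'rV[R]_n -> R :=
  match l with
  | [::] => f
  | i :: l' => partial (iter_partial l' f) i
  end.

Definition smooth (R : realType) (n : nat) (f : 'rV[R]_n -> R) : Prop :=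
  forall l : seq 'I_n,
    continuous (iter_partial l f) /\
    (forall (i : 'I_n) (x : 'rV[R]_n), derivable (iter_partial l f) x (evec R i)).

Definition boundary (R : realType) (n : nat) (A : set 'rV[R]_n) : set 'rV[R]_n :=
  closure A `\` interior A.

From HB Require Import structures.
From mathcomp Require Import all_boot all_order all_algebra.
From mathcomp Require Import all_classical all_reals all_analysis.
From mathcomp Require Import lra ring.
Set Implicit Arguments. Unset Strict Implicit.
Unset Printing Implicit Defensive.
Import Order.TTheory GRing.Theory Num.Theory.
Import numFieldNormedType.Exports.
Local Open Scope classical_set_scope.
Local Open Scope ring_scope.

(** Take [v x = sum_k g (x_k)] with the cubic [g t = t^3 - 3 t], and
    [F x = - 1/2 sum_k g'(x_k)^2].  Since the Hessian of [v] is diagonal, the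
    infinity-Laplacian of [v] is [sum_k g'(x_k)^2 g''(x_k)], which is exactly
    [- Dv . DF].  The cubic has a strict local maximum at [-1] and a strict
    local minimum at [1], so [v] has a strict local maximum at [(-1,...,-1)]
    and a strict local minimum at [(1,...,1)]; small sup-norm balls around
    these points violate the maximum and the minimum principle respectively. *)

Lemma bounded_ball (R : realFieldType) (V : normedModType R) (c : V) (r : R) :
  bounded_set (ball c r).
Proof.
rewrite /= /bounded_near.
have := nbhs_pinfty_gt (num_real (`|c| + r)); apply: filterS => M rM x.
rewrite -ball_normE /ball_ /= => cx.
have -> : x = c - (c - x) by rewrite opprB addrC subrK.
apply: le_trans (ler_normB _ _) _; apply/ltW; apply: le_lt_trans rM.
by rewrite lerD2l ltW.
Qed.

Section sup_norm.
Variables (R : realType) (n : nat).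
Implicit Types (x y c : 'rV[R]_n) (r : R).

Lemma coord_le_mx_norm x k : `|x ord0 k| <= `|x|.
Proof.
rewrite [leRHS]/Num.Def.normr /= mx_normrE.
by apply/bigmax_geP; right; exists (ord0, k).
Qed.

Lemma mx_norm_le_coord x r :
  0 <= r -> (forall k, `|x ord0 k| <= r) -> `|x| <= r.
Proof.
move=> r_ge0 xr; rewrite [leLHS]/Num.Def.normr /= mx_normrE.
by apply/bigmax_leP; split => // -[i j] _ /=; rewrite (ord1 i).
Qed.

Lemma mx_norm_attained x : 0 < `|x| -> exists k, `|x| = `|x ord0 k|.
Proof.
move=> x_gt0; have [|[i k] xk] := @mx_norm_neq0 R 1 n x.
  by rewrite -/(Num.Def.normr x) gt_eqF.
by exists k; rewrite (ord1 i) in xk.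
Qed.

(** Balls of ['rV[R]_n] are sup-norm cubes. *)
Lemma boundary_ballP c r y : 0 < r ->
  boundary (ball c r) y <->
  (forall k, `|c ord0 k - y ord0 k| <= r) /\
  exists k, `|c ord0 k - y ord0 k| = r.
Proof.
move=> r_gt0; rewrite /boundary (proj1 (interior_id _) (ball_open c r)).
rewrite -/(closed_ball c r) closed_ballE // /closed_ball_ -ball_normE /ball_ /=.
have coordB k : c ord0 k - y ord0 k = (c - y) ord0 k by rewrite !mxE.
split.
- move=> [cy_le /negP]; rewrite -leNgt => cy_ge.
  split=> [k|]; first by rewrite coordB (le_trans (coord_le_mx_norm _ _)).
  have [k cyk] := mx_norm_attained (lt_le_trans r_gt0 cy_ge).
  by exists k; apply/eqP; rewrite coordB -cyk eq_le cy_le cy_ge.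
- move=> [cy_le [k cyk]]; split.
    by apply: mx_norm_le_coord (ltW r_gt0) _ => j; rewrite -coordB.
  by apply/negP; rewrite -leNgt -cyk coordB coord_le_mx_norm.
Qed.

End sup_norm.

Section coord_poly_sum.
Variables (R : realType) (n : nat).

Definition coord_poly_sum (P : 'I_n -> {poly R}) (x : 'rV[R]_n) : R :=
  \sum_(k < n) (P k).[x ord0 k].

Lemma coord_poly_sum_single (p : {poly R}) (i : 'I_n) x :
  coord_poly_sum (fun k => if k == i then p else 0) x = p.[x ord0 i].
Proof.
rewrite /coord_poly_sum (bigD1 i) //= eqxx big1 ?addr0 //.
by move=> k /negbTE ->; rewrite horner0.
Qed.

Lemma coord_poly_sumN (p : {poly R}) x :
  coord_poly_sum (fun=> - p) x = - coord_poly_sum (fun=> p) x.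
Proof.
by rewrite /coord_poly_sum -sumrN; apply: eq_bigr => k _; rewrite hornerN.
Qed.

(** Along [e_i] only the [i]-th summand moves, so difference quotients of
    [coord_poly_sum P] are those of the polynomial function [P i]. *)
Lemma coord_poly_sum_dq P (i : 'I_n) x :
  (fun h : R => h^-1 *: ((coord_poly_sum P \o shift x) (h *: evec R i)
                         - coord_poly_sum P x))
  = (fun h : R => h^-1 *: ((horner (P i) \o shift (x ord0 i)) (h *: 1)
                           - (P i).[x ord0 i])).
Proof.
apply/funext => h; rewrite /= /shift /coord_poly_sum.
rewrite (bigD1 i) //= [in X in _ - X](bigD1 i) //= !mxE eqxx !mulr1.
rewrite (eq_bigr (fun k => (P k).[x ord0 k])); last first.
  by move=> k /negbTE ki; rewrite !mxE /= ki mulr0 add0r.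
by rewrite opprD addrACA subrr addr0 [h *: 1]mulr1.
Qed.

Lemma coord_poly_sum_derivable P i x :
  derivable (coord_poly_sum P) x (evec R i).
Proof. by rewrite /derivable coord_poly_sum_dq; exact: derivable_horner. Qed.

Lemma partial_coord_poly_sum P i :
  partial (coord_poly_sum P) i =
  coord_poly_sum (fun k => if k == i then (P i)^`() else 0).
Proof.
apply/funext => x; rewrite coord_poly_sum_single /partial /derive.
rewrite coord_poly_sum_dq -/(derive (horner (P i)) (x ord0 i) 1).
by rewrite -derive1E -derivE.
Qed.

Lemma coord_poly_sum_continuous P : continuous (coord_poly_sum P).
Proof.
apply: continuous_big => [|k _]; first exact: add_continuous.
move=> x; apply: continuous_comp; first exact: coord_continuous.
exact: continuous_horner.
Qed.

Lemma iter_partial_coord_poly_sum P (l : seq 'I_n) :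
  exists Q, iter_partial l (coord_poly_sum P) = coord_poly_sum Q.
Proof.
elim: l => [|i l [Q IH]]; first by exists P.
by eexists; rewrite /= IH partial_coord_poly_sum.
Qed.

Lemma coord_poly_sum_smooth P : smooth (coord_poly_sum P).
Proof.
move=> l; have [Q ->] := iter_partial_coord_poly_sum P l.
split=> [|i x]; first exact: coord_poly_sum_continuous.
exact: coord_poly_sum_derivable.
Qed.

Lemma coord_poly_sum_inf_laplace_drift (g : {poly R}) x :
  let v := coord_poly_sum (fun=> g) in
  let F := coord_poly_sum (fun=> - 2^-1 *: (g^`() * g^`())) in
  \sum_(i < n) \sum_(j < n)
     partial v i x * partial v j x * partial (partial v j) i x
  + \sum_(i < n) partial v i x * partial F i x = 0.
Proof.
move=> v F.
have Dv i : partial v i x = (g^`()).[x ord0 i].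
  by rewrite partial_coord_poly_sum coord_poly_sum_single.
have DF i : partial F i x = - ((g^`()).[x ord0 i] * (g^`()^`()).[x ord0 i]).
  rewrite partial_coord_poly_sum coord_poly_sum_single derivZ derivM !hornerE.
  by field.
have D2v i j :
    partial (partial v j) i x = if i == j then (g^`()^`()).[x ord0 i] else 0.
  rewrite !partial_coord_poly_sum coord_poly_sum_single.
  by case: eqP => [->|_]; rewrite ?deriv0 ?horner0.
rewrite -big_split /=; apply: big1 => i _.
rewrite (bigD1 i) //= big1 => [|j /negbTE ji]; last first.
  by rewrite D2v eq_sym ji mulr0.
by rewrite D2v eqxx DF !Dv; ring.
Qed.

(** A boundary point of the cube has a coordinate at distance [r] from [a],
    which costs at least [p.[a] - p.[b]] compared with the centre; moving one
    coordinate of the centre to [b] costs exactly that. *)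
Lemma coord_poly_sum_max_principle_fails (p : {poly R}) (a b r : R)
    (i0 : 'I_n) :
  0 < r -> `|a - b| = r ->
  (forall t, `|a - t| <= r -> p.[t] <= p.[a]) ->
  (forall t, `|a - t| = r -> p.[t] <= p.[b]) ->
  p.[b] < p.[a] ->
  let v := coord_poly_sum (fun=> p) in
  exists2 y0, boundary (ball (const_mx a) r) y0 &
    (forall y, boundary (ball (const_mx a) r) y -> v y <= v y0) /\
    (exists2 x, ball (const_mx a) r x & v y0 < v x).
Proof.
move=> r_gt0 ab_r p_le_a p_le_b pb_lt_pa v; set c : 'rV[R]_n := const_mx a.
have v_split y i : v y = p.[y ord0 i] + \sum_(k < n | k != i) p.[y ord0 k].
  by rewrite /v /coord_poly_sum (bigD1 i).
have v_bound y : boundary (ball c r) y -> v y <= v c - p.[a] + p.[b].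
  move=> /boundary_ballP-/(_ r_gt0) [y_le [i y_eq]].
  rewrite (v_split y i) (v_split c i) mxE [p.[a] + _ - _]addrAC subrr add0r.
  rewrite [leRHS]addrC.
  apply: lerD; first by apply: p_le_b; move: y_eq; rewrite mxE.
  by apply: ler_sum => k _; rewrite mxE p_le_a //; move: (y_le k); rewrite mxE.
pose y0 := c + (b - a) *: evec R i0.
have y0_coord k : y0 ord0 k = if k == i0 then b else a.
  rewrite !mxE /= eq_sym; case: eqP => _; first by rewrite mulr1 addrC subrK.
  by rewrite mulr0 addr0.
have y0_val : v y0 = v c - p.[a] + p.[b].
  rewrite (v_split y0 i0) (v_split c i0) y0_coord eqxx mxE.
  rewrite [p.[a] + _ - _]addrAC subrr add0r addrC.
  by congr (_ + _); apply: eq_bigr => k /negbTE ki; rewrite y0_coord ki mxE.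
exists y0.
  apply/boundary_ballP => //; split => [k|]; last first.
    by exists i0; rewrite mxE y0_coord eqxx.
  by rewrite mxE y0_coord; case: eqP => _; rewrite ?ab_r // subrr normr0 ltW.
split=> [y /v_bound|]; first by rewrite y0_val.
by exists c; [exact: ballxx | rewrite y0_val; lra].
Qed.

Lemma coord_poly_sum_min_principle_fails (p : {poly R}) (a b r : R)
    (i0 : 'I_n) :
  0 < r -> `|a - b| = r ->
  (forall t, `|a - t| <= r -> p.[a] <= p.[t]) ->
  (forall t, `|a - t| = r -> p.[b] <= p.[t]) ->
  p.[a] < p.[b] ->
  let v := coord_poly_sum (fun=> p) in
  exists2 y0, boundary (ball (const_mx a) r) y0 &
    (forall y, boundary (ball (const_mx a) r) y -> v y0 <= v y) /\
    (exists2 x, ball (const_mx a) r x & v x < v y0).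
Proof.
move=> r_gt0 ab_r pa_le pb_le pa_lt_pb v.
have negp_le_a t : `|a - t| <= r -> (- p).[t] <= (- p).[a].
  by move/pa_le; rewrite !hornerN lerN2.
have negp_le_b t : `|a - t| = r -> (- p).[t] <= (- p).[b].
  by move/pb_le; rewrite !hornerN lerN2.
have negpb_lt_negpa : (- p).[b] < (- p).[a] by rewrite !hornerN ltrN2.
have [y0 y0_bd [y0_max [x x_in y0_lt]]] := coord_poly_sum_max_principle_fails
  i0 r_gt0 ab_r negp_le_a negp_le_b negpb_lt_negpa.
exists y0 => //; split=> [y /y0_max|]; first by rewrite !coord_poly_sumN lerN2.
by exists x => //; move: y0_lt; rewrite !coord_poly_sumN ltrN2.
Qed.

End coord_poly_sum.

Definition cubic {R : nzRingType} : {poly R} := 'X^3 - 3%:P * 'X.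

Section cubic.
Variable R : realType.
Implicit Type t : R.

Lemma cubicE t : cubic.[t] = t^+3 - 3 * t.
Proof. by rewrite /cubic !hornerE. Qed.

Lemma cubic_local_max t : `|-1 - t| <= 2^-1 -> cubic.[t] <= cubic.[-1].
Proof.
rewrite !cubicE ler_norml => /andP[? ?].
have : 0 <= (t + 1)^+2 * (2 - t) by apply: mulr_ge0; [exact: sqr_ge0 | lra].
nra.
Qed.

Lemma cubic_local_min t : `|1 - t| <= 2^-1 -> cubic.[1] <= cubic.[t].
Proof.
rewrite !cubicE ler_norml => /andP[? ?].
have : 0 <= (t - 1)^+2 * (t + 2) by apply: mulr_ge0; [exact: sqr_ge0 | lra].
nra.
Qed.

Lemma cubic_le_at_dist_half_neg1 t :
  `|-1 - t| = 2^-1 -> cubic.[t] <= cubic.[-1/2].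
Proof.
rewrite !cubicE => /eqP; rewrite eqr_norml => /andP[/orP[/eqP|/eqP] ? _].
- have -> : t = -3/2 by lra.
  lra.
- have -> : t = -1/2 by lra.
  lra.
Qed.

Lemma cubic_ge_at_dist_half_1 t :
  `|1 - t| = 2^-1 -> cubic.[1/2] <= cubic.[t].
Proof.
rewrite !cubicE => /eqP; rewrite eqr_norml => /andP[/orP[/eqP|/eqP] ? _].
- have -> : t = 1/2 by lra.
  lra.
- have -> : t = 3/2 by lra.
  lra.
Qed.

End cubic.

Theorem mainTheorem3 (R : realType) (n : nat) (hn : (1 <= n)%N) :
  exists (F v : 'rV[R]_n -> R),
    smooth F /\ smooth v /\
    (forall x : 'rV[R]_n,
       \sum_(i < n) \sum_(j < n)
          partial v i x * partial v j x * partial (partial v j) i x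
       + \sum_(i < n) partial v i x * partial F i x = 0) /\
    (exists Omega_p : set 'rV[R]_n,
       [/\ open Omega_p, bounded_set Omega_p &
         exists2 y0, boundary Omega_p y0 &
           (forall y, boundary Omega_p y -> v y <= v y0) /\
           (exists2 x, Omega_p x & v y0 < v x)]) /\
    (exists Omega_m : set 'rV[R]_n,
       [/\ open Omega_m, bounded_set Omega_m &
         exists2 y0, boundary Omega_m y0 &
           (forall y, boundary Omega_m y -> v y0 <= v y) /\
           (exists2 x, Omega_m x & v x < v y0)]).
Proof.
pose i0 : 'I_n := Ordinal hn.
have r_gt0 : (0 : R) < 2^-1 by [].
exists (coord_poly_sum (fun=> - 2^-1 *: (cubic^`() * cubic^`()))).
exists (coord_poly_sum (fun=> cubic)).
split; first exact: coord_poly_sum_smooth.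
split; first exact: coord_poly_sum_smooth.
split; first exact: coord_poly_sum_inf_laplace_drift.
split.
- exists (ball (const_mx (-1) : 'rV[R]_n) 2^-1).
  split; [exact: ball_open | exact: bounded_ball |].
  apply: (coord_poly_sum_max_principle_fails (b := -1/2) i0 r_gt0).
  + by rewrite ler0_norm; lra.
  + exact: cubic_local_max.
  + exact: cubic_le_at_dist_half_neg1.
  + by rewrite !cubicE; lra.
- exists (ball (const_mx 1 : 'rV[R]_n) 2^-1).
  split; [exact: ball_open | exact: bounded_ball |].
  apply: (coord_poly_sum_min_principle_fails (b := 1/2) i0 r_gt0).
  + by rewrite ger0_norm; lra.
  + exact: cubic_local_min.
  + exact: cubic_ge_at_dist_half_1.
  + by rewrite !cubicE; lra.
Qed.
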